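(* A reflexive graph $G$ contains an invertible pair if and only if it contains a weak edge-asteroid.
   Context: A graph is reflexive if every vertex carries a loop; its edge set $E(G)$ contains all loops $vv$, and an ''edge'' $uu'$ may be a loop ($u=u'$). A walk $u_0u_1\dots u_t$ ($t\ge 1$) is a sequence of vertices with $u_ju_{j+1}\in E(G)$ for all $j$ (consecutive vertices may coincide); its edges are $u_ju_{j+1}$. $Z(G)$ is the set of ordered pairs $(u,v)$ of distinct vertices of $G$. For $(u,v),(u',v')\in Z(G)$, $(u,v)$ forces $(u',v')$, written $(u,v)\Lambda(u',v')$, if either $u=u'$ and $v=v'$, or $uu'\in E(G)$, $vv'\in E(G)$, $uv'\notin E(G)$ and $vu'\notin E(G)$. We write $(u,v)\sim(u',v')$ if there are walks $w_1\dots w_m$ and $z_1\dots z_m$ in $G$ with $(w_1,z_1)=(u,v)$, $(w_m,z_m)=(u',v')$ and $(w_j,z_j)\Lambda(w_{j+1},z_{j+1})$ for all $j$. An invertible pair is a pair of distinct vertices $u,v$ with $(u,v)\sim(v,u)$. For edges $uu'$, $vv'$ of $G$ with $\{u,u'\}\cap\{v,v'\}=\emptyset$, $uu'$ avoids $vv'$ if one of the following holds: (i) $u=u'$, $v=v'$, $uv\notin E(G)$; (ii) $u=u'$, $v\ne v'$, $uv\notin E(G)$ and $uv'\notin E(G)$; (iii) $u\ne u'$, $v=v'$, $uv\notin E(G)$ and $u'v\notin E(G)$; (iv) $u\ne u'$, $v\ne v'$, and $\{u,u',v,v'\}$ induces a $2K_2$, a $P_4$, or a $C_4$ in $G$. An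 edge avoids a walk if it avoids every edge of the walk. A weak edge-asteroid is a set of edges $x_0y_0,\dots,x_{2k}y_{2k}$ ($k\ge1$) such that for each $i$, $x_iy_i$ avoids some walk whose first edge is $x_{i+k}y_{i+k}$ and whose last edge is $x_{i+k+1}y_{i+k+1}$ (subscripts modulo $2k+1$). *)

(* Finite reflexive (undirected) graphs as a symmetric,
   reflexive boolean relation e on a finType T. *)
From mathcomp Require Import all_boot.
Set Implicit Arguments. Unset Strict Implicit. Unset Printing Implicit Defensive.

Section Defs.
Variable T : finType.
Variable e : rel T.

Definition Lam (p q : T * T) : bool :=
  [&& p.1 != p.2, q.1 != q.2 &
      (p == q) || [&& e p.1 q.1, e p.2 q.2, ~~ e p.1 q.2 & ~~ e p.2 q.1]].

Definition walk_step (p q : T * T) : bool := [&& e p.1 q.1, e p.2 q.2 & Lam p q].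

Definition sim (p q : T * T) : Prop :=
  exists s : seq (T * T), [/\ 0 < size s, path walk_step p s & last p s = q].

Definition invertible_pair (u v : T) : Prop := u != v /\ sim (u, v) (v, u).

(* walks u_0 u_1 ... u_t (t >= 1), represented by u_0 and s = [u_1;...;u_t] *)
Definition is_walk (x : T) (s : seq T) : bool := (0 < size s) && path e x s.
Definition walk_edges (x : T) (s : seq T) : seq (T * T) := zip (x :: s) s.
Definition first_edge (x : T) (s : seq T) : T * T := head (x, x) (walk_edges x s).
Definition last_edge (x : T) (s : seq T) : T * T := last (x, x) (walk_edges x s).

(* equality of (unordered) edges given by ordered representatives *)
Definition same_edge (a b : T * T) : bool := (a == b) || (a == (b.2, b.1)).

Definition induces (S : {set T}) (H : rel 'I_4) : Prop :=
  exists f : 'I_4 -> T,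
    [/\ injective f, [set f i | i in 'I_4] = S &
        forall i j : 'I_4, i != j -> e (f i) (f j) = H i j].

(* patterns: P4 = 0-1-2-3, C4 = 0-1-2-3-0, 2K2 = {01, 23} *)
Definition P4_pat : rel 'I_4 :=
  fun i j => ((i : nat) == j.+1) || ((j : nat) == i.+1).
Definition C4_pat : rel 'I_4 :=
  fun i j => P4_pat i j || (((i : nat) == 0) && ((j : nat) == 3))
                       || (((i : nat) == 3) && ((j : nat) == 0)).
Definition twoK2_pat : rel 'I_4 :=
  fun i j => P4_pat i j && ((i : nat) + j != 3).

Definition avoids (a b : T * T) : Prop :=
  let: (u, u') := a in let: (v, v') := b in
  [/\ e u u', e v v', [set u; u'] :&: [set v; v'] = set0 &
   [\/ [/\ u = u', v = v' & ~~ e u v],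
       [/\ u = u', v != v', ~~ e u v & ~~ e u v'],
       [/\ u != u', v = v', ~~ e u v & ~~ e u' v] |
       [/\ u != u', v != v' &
           let S := [set u; u'; v; v'] in
           [\/ induces S twoK2_pat, induces S P4_pat | induces S C4_pat]]]].

Definition avoids_walk (a : T * T) (x : T) (s : seq T) : Prop :=
  forall b, b \in walk_edges x s -> avoids a b.

Definition weak_edge_asteroid (k : nat) (x y : nat -> T) : Prop :=
  [/\ 1 <= k,
      forall i, i < k.*2.+1 -> e (x i) (y i) &
      forall i, i < k.*2.+1 ->
        let j := (i + k) %% k.*2.+1 in
        let j' := (i + k + 1) %% k.*2.+1 in
        exists (w0 : T) (ws : seq T),
          [/\ is_walk w0 ws,
              same_edge (first_edge w0 ws) (x j, y j),
              same_edge (last_edge w0 ws) (x j', y j') &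
              avoids_walk (x i, y i) w0 ws]].

End Defs.

From mathcomp Require Import all_boot zify.
Set Implicit Arguments. Unset Strict Implicit. Unset Printing Implicit Defensive.

(* Avoidance is first made combinatorial (avoidsP): edges uu', vv' avoid each
   other iff their endpoints are distinct and either both crossing pairs uv',
   u'v or both parallel pairs uv, u'v' are non-edges; indeed 2K2, P4 and C4 are
   the graphs on two disjoint edges in which no vertex dominates the others.

   Asteroid => invertible pair.  For edges a, b, the crossing pairs (x, y), with
   x an endpoint of a and y one of b, moving strictly to the two other endpoints,
   are all ~-equivalent, and if a avoids a walk then the crossing pairs of a with
   its first and last edges are equivalent.  Along the orbit i |-> i + k + 1 of
   the 2k+1 asteroid edges each step swaps the pair; after an odd number of steps
   some pair z satisfies z ~ swap z.

   Invertible pair => asteroid.  A ~-path from (u, v) to (v, u) without trivial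
   steps, continued by its swap, gives a closed walk w of length 2m, m >= 2,
   whose antipodal vertices w_n, w_(n+m) are distinct with w_n not adjacent to
   w_(n+m+1).  For k = m - 1 the edges w_0w_1, ..., w_2k w_(2k+1) form a weak
   edge-asteroid, each edge avoiding the three edges opposite to it. *)

Ltac ord4_cases := let i := fresh "i" in move=> i; case: i => [[|[|[|[|?]]]] ?] //.

(* A pattern on 'I_4 is dominating-free when no vertex is adjacent to the
   three others; this is the only property of 2K2, P4 and C4 used below. *)
Definition dominating_free (H : rel 'I_4) : Prop :=
  forall i j1 j2 j3 : 'I_4, uniq [:: j1; j2; j3] -> ~~ [&& H i j1, H i j2 & H i j3].

Lemma twoK2_dominating_free : dominating_free twoK2_pat.
Proof. by do 4 ord4_cases. Qed.

Lemma P4_dominating_free : dominating_free P4_pat.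
Proof. by do 4 ord4_cases. Qed.

Lemma C4_dominating_free : dominating_free C4_pat.
Proof. by do 4 ord4_cases. Qed.

Section ReflexiveGraph.
Variables (T : finType) (e : rel T).
Hypotheses (e_refl : forall v : T, e v v) (e_sym : symmetric e).

Lemma nonadj_neq (a b : T) : ~~ e a b -> a != b.
Proof. by apply: contraNneq => ->; rewrite e_refl. Qed.

Lemma nonadj_neighbour_neq (a b c : T) : ~~ e a b -> e a c -> b != c.
Proof. by move=> nab; apply: contraTneq => <-. Qed.

Lemma disjoint_pairsP (u u' v v' : T) :
  reflect ([set u; u'] :&: [set v; v'] = set0) [&& u != v, u != v', u' != v & u' != v'].
Proof.
apply: (iffP idP) => [/and4P[uv uv' u'v u'v']|disj].
  apply/setP => z; rewrite !inE.
  case: (eqVneq z u) => [->|_]; first by rewrite (negbTE uv) (negbTE uv').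
  by case: (eqVneq z u') => [->|_]; rewrite ?(negbTE u'v) ?(negbTE u'v').
have common z : z \in [set u; u'] -> z \in [set v; v'] -> False.
  by move=> zu zv; have := in_set0 z; rewrite -disj inE zu zv.
by apply/and4P; split; apply/eqP => eq_z;
  [apply: (common u) | apply: (common u) | apply: (common u') | apply: (common u')];
  rewrite !inE ?eq_z eqxx ?orbT.
Qed.

Lemma induced_dominating_free (S : {set T}) (H : rel 'I_4) (z n1 n2 n3 : T) :
  dominating_free H -> induces e S H ->
  {subset [:: z; n1; n2; n3] <= S} -> uniq [:: z; n1; n2; n3] ->
  ~~ [&& e z n1, e z n2 & e z n3].
Proof.
move=> domH [f [f_inj f_im f_e]] sub4.
have inS x : x \in [:: z; n1; n2; n3] -> exists i, x = f i.
  by move/sub4; rewrite -f_im => /imsetP[i _ ->]; exists i.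
case: (inS z) => [|i ->]; first by rewrite mem_head.
case: (inS n1) => [|j1 ->]; first by rewrite !inE eqxx ?orbT.
case: (inS n2) => [|j2 ->]; first by rewrite !inE eqxx ?orbT.
case: (inS n3) => [|j3 ->]; first by rewrite !inE eqxx ?orbT.
rewrite /= !inE !(inj_eq f_inj) !negb_or -!andbA.
rewrite andbT => /and4P[ij1 ij2 ij3 /and3P[j12 j13 j23]].
rewrite !f_e //; apply: domH.
by rewrite /= !inE !negb_or j12 j13 j23.
Qed.

Lemma induces_quad (a b c d : T) (H : rel 'I_4) :
  uniq [:: a; b; c; d] ->
  (forall i j : 'I_4, i != j ->
     e (nth a [:: a; b; c; d] i) (nth a [:: a; b; c; d] j) = H i j) ->
  induces e [set a; b; c; d] H.
Proof.
move=> uniq4 edges; exists (fun i : 'I_4 => nth a [:: a; b; c; d] i); split => //.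
  by move=> i j /eqP; rewrite nth_uniq // => /eqP; apply: val_inj.
have set4E : [set a; b; c; d] =i [:: a; b; c; d] by move=> z; rewrite !inE !orbA.
apply/setP => z; rewrite set4E; apply/imsetP/idP => [[i _ ->]|z4].
  by rewrite mem_nth.
have z_idx : index z [:: a; b; c; d] < 4 by rewrite index_mem.
by exists (Ordinal z_idx); rewrite ?nth_index.
Qed.

Local Ltac edge_fact :=
  solve [ done | apply/negbTE; done | rewrite e_sym; done | rewrite e_sym; apply/negbTE; done ].

Lemma induces_2K2 (a b c d : T) : uniq [:: a; b; c; d] ->
  e a b -> e c d -> ~~ e a c -> ~~ e a d -> ~~ e b c -> ~~ e b d ->
  induces e [set a; b; c; d] twoK2_pat.
Proof. by move=> *; apply: induces_quad => //; do 2 ord4_cases; move=> _ /=; edge_fact. Qed.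

Lemma induces_P4 (a b c d : T) : uniq [:: a; b; c; d] ->
  e a b -> e b c -> e c d -> ~~ e a c -> ~~ e b d -> ~~ e a d ->
  induces e [set a; b; c; d] P4_pat.
Proof. by move=> *; apply: induces_quad => //; do 2 ord4_cases; move=> _ /=; edge_fact. Qed.

Lemma induces_C4 (a b c d : T) : uniq [:: a; b; c; d] ->
  e a b -> e b c -> e c d -> e a d -> ~~ e a c -> ~~ e b d ->
  induces e [set a; b; c; d] C4_pat.
Proof. by move=> *; apply: induces_quad => //; do 2 ord4_cases; move=> _ /=; edge_fact. Qed.

Lemma perm_swap (a b : T) (s : seq T) : perm_eq [:: a, b & s] [:: b, a & s].
Proof. by rewrite (perm_catCA [:: a] [:: b] s). Qed.

Lemma set4_swap12 (a b c d : T) : [set a; b; c; d] = [set b; a; c; d].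
Proof. by rewrite [a |: _]setUC. Qed.

Lemma set4_swap34 (a b c d : T) : [set a; b; c; d] = [set a; b; d; c].
Proof. by rewrite setUAC. Qed.

Lemma uniq4_swap34 (a b c d : T) : uniq [:: a; b; c; d] = uniq [:: a; b; d; c].
Proof. by apply: perm_uniq; rewrite !perm_cons perm_swap. Qed.

Lemma four_vertex_pattern (u u' v v' : T) :
  uniq [:: u; u'; v; v'] -> e u u' -> e v v' -> ~~ e u v' -> ~~ e u' v ->
  let S := [set u; u'; v; v'] in
  [\/ induces e S twoK2_pat, induces e S P4_pat | induces e S C4_pat].
Proof.
move=> uniq4 uu' vv' nuv' nu'v S.
have uniq4' : uniq [:: u; u'; v'; v] by rewrite -uniq4_swap34.
have v'v : e v' v by rewrite e_sym.
case: (boolP (e u v)) => [uv|nuv]; case: (boolP (e u' v')) => [u'v'|nu'v'].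
- by apply: Or33; rewrite /S set4_swap34; apply: induces_C4.
- apply: Or32; rewrite /S set4_swap12; apply: induces_P4 => //; last by rewrite e_sym.
  by rewrite -(perm_uniq (perm_swap _ _ _)).
- by apply: Or32; rewrite /S set4_swap34; apply: induces_P4.
- by apply: Or31; apply: induces_2K2.
Qed.

Definition avoid_config (u u' v v' : T) : bool :=
  [&& e u u', e v v', [&& u != v, u != v', u' != v & u' != v'] &
      (~~ e u v' && ~~ e u' v) || (~~ e u v && ~~ e u' v')].

(* In an induced 2K2, P4 or C4 on u, u', v, v' some crossing pair and some
   parallel pair are non-edges, since otherwise a vertex dominates the others. *)
Lemma pattern_config (u u' v v' : T) :
  uniq [:: u; u'; v; v'] -> e u u' -> e v v' ->
  (let S := [set u; u'; v; v'] in
   [\/ induces e S twoK2_pat, induces e S P4_pat | induces e S C4_pat]) ->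
  (~~ e u v' && ~~ e u' v) || (~~ e u v && ~~ e u' v').
Proof.
move=> uniq4 uu' vv' pat.
have nodom z n1 n2 n3 : perm_eq [:: z; n1; n2; n3] [:: u; u'; v; v'] ->
    ~~ [&& e z n1, e z n2 & e z n3].
  move=> zn; have sub4 : {subset [:: z; n1; n2; n3] <= [set u; u'; v; v']}.
    by move=> x; rewrite (perm_mem zn) !inE !orbA.
  have uniqz := uniq4; rewrite -(perm_uniq zn) in uniqz.
  case: pat => pat; apply: (induced_dominating_free _ pat sub4 uniqz).
  - exact: twoK2_dominating_free.
  - exact: P4_dominating_free.
  - exact: C4_dominating_free.
apply/negPn/negP; rewrite negb_or !negb_and !negbK => /andP[/orP[uv'|u'v] /orP[uv|u'v']].
- by move: (nodom u u' v v' (perm_refl _)); rewrite uu' uv uv'.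
- have: perm_eq [:: v'; v; u'; u] [:: u; u'; v; v'].
    by apply/permPl; exact: (perm_rev [:: u; u'; v; v']).
  by move/nodom; rewrite !(e_sym v') vv' u'v' uv'.
- have: perm_eq [:: v; v'; u; u'] [:: u; u'; v; v'].
    by apply/permPl; exact: (perm_rot 2 [:: u; u'; v; v']).
  by move/nodom; rewrite vv' (e_sym v u') u'v (e_sym v u) uv.
- have: perm_eq [:: u'; u; v'; v] [:: u; u'; v; v'].
    by apply: perm_trans (perm_swap _ _ _) _; rewrite !perm_cons perm_swap.
  by move/nodom; rewrite e_sym uu' u'v u'v'.
Qed.

(* Cases (i)-(iii) of avoidance are the loop cases of avoid_config, and case
   (iv) is equivalent to it by pattern_config and four_vertex_pattern. *)
Lemma avoidsP (u u' v v' : T) : avoids e (u, u') (v, v') <-> avoid_config u u' v v'.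
Proof.
split.
  case=> uu' vv' /disjoint_pairsP dist cases; rewrite /avoid_config uu' vv' dist /=.
  case: cases => [[<- <- ->]|[<- _ -> ->]|[_ <- -> ->]|[nu nv pat]]; rewrite ?orbT //.
  apply: pattern_config => //.
  by move: dist; rewrite /= !inE !negb_or nu nv => /and4P[-> -> -> ->].
case/and4P => uu' vv' dist nonadj; split => //; first exact/disjoint_pairsP.
case: (eqVneq u u') => [eq_u|nu]; case: (eqVneq v v') => [eq_v|nv].
- by apply: Or41; subst; move: nonadj; rewrite orbb => /andP[].
- by apply: Or42; subst; move: nonadj; rewrite orbC => /orP[] /andP[].
- by apply: Or43; subst; move: nonadj => /orP[] /andP[].
have uniq4 : uniq [:: u; u'; v; v'].
  by move: dist; rewrite /= !inE !negb_or nu nv => /and4P[-> -> -> ->].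
apply: Or44; split => //.
case/orP: nonadj => /andP[n1 n2]; first exact: four_vertex_pattern.
rewrite /= set4_swap34; apply: four_vertex_pattern => //.
  by rewrite -uniq4_swap34.
by rewrite e_sym.
Qed.

Definition strict_step (p q : T * T) : bool :=
  [&& p.1 != p.2, e p.1 q.1, e p.2 q.2, ~~ e p.1 q.2 & ~~ e p.2 q.1].

Lemma strict_step_neq (p q : T * T) : strict_step p q -> q.1 != q.2.
Proof. by case/and5P => _ pq1 _ npq2 _; apply: contraNneq npq2 => <-. Qed.

Lemma walk_stepE (p q : T * T) :
  walk_step e p q = ((p == q) && (p.1 != p.2)) || strict_step p q.
Proof.
rewrite /walk_step /Lam /strict_step; case: (eqVneq p q) => [<-|npq] /=.
  by rewrite !e_refl; case: (p.1 != p.2).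
apply/idP/idP => [/and5P[-> -> -> _ /and4P[_ _ -> ->]] //|pq].
by have := strict_step_neq pq; case/and5P: pq => -> -> -> -> -> ->.
Qed.

Lemma strict_step_swap (p q : T * T) :
  strict_step (swap_pair p) (swap_pair q) = strict_step p q.
Proof.
rewrite /strict_step /= eq_sym; case: (p.1 != p.2) => //=.
by case: (e p.1 q.1) (e p.2 q.2) (e p.1 q.2) (e p.2 q.1) => [] [] [] [].
Qed.

Lemma walk_step_swap (p q : T * T) :
  walk_step e (swap_pair p) (swap_pair q) = walk_step e p q.
Proof.
by rewrite !walk_stepE strict_step_swap (can_eq swap_pairK) [(swap_pair p).1 == _]eq_sym.
Qed.

Lemma sim_trans (p q r : T * T) : sim e p q -> sim e q r -> sim e p r.
Proof.
case=> [s1 [s1_gt0 s1_path s1_last]] [s2 [_ s2_path s2_last]].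
exists (s1 ++ s2); split; first by rewrite size_cat addn_gt0 s1_gt0.
  by rewrite cat_path s1_path s1_last.
by rewrite last_cat s1_last.
Qed.

Lemma sim_refl (p : T * T) : p.1 != p.2 -> sim e p p.
Proof. by move=> np; exists [:: p]; rewrite /= walk_stepE eqxx np. Qed.

Lemma sim_of_strict (p q : T * T) : strict_step p q -> sim e p q.
Proof. by move=> pq; exists [:: q]; rewrite /= walk_stepE pq orbT. Qed.

Lemma sim_swap (p q : T * T) : sim e p q -> sim e (swap_pair p) (swap_pair q).
Proof.
case=> s [s_gt0 s_path s_last]; exists (map swap_pair s); split.
- by rewrite size_map.
- by rewrite path_map (eq_path walk_step_swap).
- by rewrite last_map s_last.
Qed.

Lemma sim_slide_fst (x x' y : T) :
  x != y -> e x x' -> ~~ e x y -> ~~ e x' y -> sim e (x, y) (x', y).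
Proof.
move=> xy xx' nxy nx'y; apply: sim_of_strict.
by rewrite /strict_step /= xy xx' e_refl nxy e_sym nx'y.
Qed.

Lemma sim_slide_snd (x y y' : T) :
  x != y -> e y y' -> ~~ e x y -> ~~ e x y' -> sim e (x, y) (x, y').
Proof.
move=> xy yy' nxy nxy'; apply: sim_of_strict.
by rewrite /strict_step /= xy yy' e_refl nxy' e_sym nxy.
Qed.

Definition endpt (a : T * T) (s : bool) : T := if s then a.2 else a.1.

Lemma endpt_swap (a : T * T) (s : bool) : endpt (swap_pair a) s = endpt a (~~ s).
Proof. by case: s. Qed.

Definition crossing (a b : T * T) (s t : bool) : bool :=
  strict_step (endpt a s, endpt b t) (endpt a (~~ s), endpt b (~~ t)).

Definition cross_pair (a b z : T * T) : Prop :=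
  exists s t, z = (endpt a s, endpt b t) /\ crossing a b s t.

Lemma cross_pair_neq (a b z : T * T) : cross_pair a b z -> z.1 != z.2.
Proof. by case=> s [t [-> /and5P[]]]. Qed.

Lemma cross_pair_sim (a b z z' : T * T) :
  cross_pair a b z -> cross_pair a b z' -> sim e z z'.
Proof.
case=> s [t [-> cst]] [s' [t' [->]]].
have [-> | ->] : s' = s \/ s' = ~~ s by case: (s) (s') => [] []; auto.
all: have [-> | ->] : t' = t \/ t' = ~~ t by case: (t) (t') => [] []; auto.
all: move: cst; rewrite /crossing /strict_step /= ?negbK.
all: move=> /and5P[ne_st e_s e_t n_s n_t] /and5P[ne_st' _ _ n_s' n_t'].
- exact: sim_refl.
- by apply: sim_slide_snd; rewrite // e_sym.
- by apply: sim_slide_fst; rewrite // e_sym.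
- by apply: sim_of_strict; rewrite /strict_step ne_st e_s e_t n_s n_t.
Qed.

Lemma avoids_crossing (a b : T * T) :
  avoids e a b -> forall t, exists s, crossing a b s t.
Proof.
case: a b => u u' [v v'] /avoidsP /and4P[uu' vv' /and4P[uv uv' u'v u'v'] nonadj] t.
have [u'u v'v] : e u' u /\ e v' v by split; rewrite e_sym.
case/orP: nonadj => /andP[n1 n2]; [exists t | exists (~~ t)];
  by case: t; rewrite /crossing /strict_step /= ?uv ?uv' ?u'v ?u'v' ?uu' ?vv' ?u'u ?v'v
     ?(e_sym v) ?(e_sym v') ?n1 ?n2.
Qed.

Lemma cross_pair_same_edge (a b b' z : T * T) :
  same_edge b b' -> cross_pair a b z -> cross_pair a b' z.
Proof.
case/orP => /eqP -> // [s [t [-> cst]]].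
move: cst; rewrite /crossing -[(b'.2, b'.1)]/(swap_pair b') !endpt_swap => cst.
by exists s, (~~ t).
Qed.

Lemma cross_pair_swap (a b z : T * T) :
  cross_pair a b z -> cross_pair b a (swap_pair z).
Proof.
by case=> s [t [-> cst]]; exists t, s; split => //; rewrite /crossing -strict_step_swap.
Qed.

Lemma same_edge_sym (b b' : T * T) : same_edge b b' -> same_edge b' b.
Proof.
case: b b' => [u u'] [v v']; rewrite /same_edge !xpair_eqE.
by case/orP => /andP[/eqP-> /eqP->]; rewrite !eqxx ?orbT.
Qed.

(* If a avoids two consecutive edges b1b2, b2b3 of a walk, then some crossing
   pair of a, b1b2 is equivalent to some crossing pair of a, b2b3: both can be
   chosen with second coordinate b2. *)
Lemma cross_pairs_linked (a : T * T) (b1 b2 b3 : T) :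
  avoids e a (b1, b2) -> avoids e a (b2, b3) ->
  exists z z', [/\ cross_pair a (b1, b2) z, cross_pair a (b2, b3) z' & sim e z z'].
Proof.
move=> avoid12 avoid23.
have [s1 c1] := avoids_crossing avoid12 true.
have [s2 c2] := avoids_crossing avoid23 false.
exists (endpt a s1, b2), (endpt a s2, b2).
split; [by exists s1, true | by exists s2, false |].
move: c1 c2; rewrite /crossing /strict_step /= => /and5P[ne1 e1 _ _ n1].
have [-> _ | ->] : s2 = s1 \/ s2 = ~~ s1 by case: (s1) (s2) => [] []; auto.
  exact: sim_refl.
rewrite negbK => /and5P[_ _ _ _ n2].
by apply: sim_slide_fst; rewrite // e_sym.
Qed.

Lemma cross_pair_walk (a : T * T) (w0 : T) (ws : seq T) (z z' : T * T) :
  avoids_walk e a w0 ws ->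
  cross_pair a (first_edge w0 ws) z -> cross_pair a (last_edge w0 ws) z' -> sim e z z'.
Proof.
elim: ws w0 z => [|w1 ws IH] w0 z avoid cz cz'; first exact: cross_pair_sim cz cz'.
case: ws IH avoid cz cz' => [|w2 ws] IH avoid cz cz'; first exact: cross_pair_sim cz cz'.
have avoid01 : avoids e a (w0, w1) by apply: avoid; rewrite mem_head.
have avoid_tail : avoids_walk e a w1 (w2 :: ws).
  by move=> c c_in; apply: avoid; rewrite /walk_edges /= inE c_in orbT.
have [z1 [z2 [c1 c2 sim12]]] := cross_pairs_linked avoid01 (avoid_tail _ (mem_head _ _)).
exact: sim_trans (cross_pair_sim cz c1) (sim_trans sim12 (IH _ _ avoid_tail c2 cz')).
Qed.

Lemma avoided_walk_cross_pairs (a b b' : T * T) :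
  (exists (w0 : T) (ws : seq T),
     [/\ is_walk e w0 ws, same_edge (first_edge w0 ws) b,
         same_edge (last_edge w0 ws) b' & avoids_walk e a w0 ws]) ->
  (exists z, cross_pair a b z) /\
  (forall z z', cross_pair a b z -> cross_pair a b' z' -> sim e z z').
Proof.
case=> w0 [[|w1 ws] [/andP[ws_gt0 _] first_b last_b' avoid]] //.
split=> [|z z' cz cz'].
  have [s cst] := avoids_crossing (avoid _ (mem_head _ _)) false.
  by exists (endpt a s, w0); apply: cross_pair_same_edge first_b _; exists s, false.
apply: (cross_pair_walk avoid).
  by apply: cross_pair_same_edge cz; apply: same_edge_sym.
by apply: cross_pair_same_edge cz'; apply: same_edge_sym.
Qed.

Lemma odd_orbit_sim_swap (Q : nat -> T * T -> Prop) (N : nat) :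
  odd N -> (forall n, exists z, Q n z) ->
  (forall z z', Q 0 z -> Q 0 z' -> sim e z z') ->
  (forall n z z', Q n z -> Q n.+1 z' -> sim e z (swap_pair z')) ->
  (forall z, Q 0 z -> Q N z) ->
  exists z, Q 0 z /\ sim e z (swap_pair z).
Proof.
move=> odd_N Q_nonempty Q0_sim Q_step Q_period.
have chain n z z' : Q 0 z -> Q n z' -> sim e z (if odd n then swap_pair z' else z').
  elim: n z' => [|n IH] z' Q0z Qnz'; first exact: Q0_sim.
  have [y Qny] := Q_nonempty n.
  have := Q_step _ _ _ Qny Qnz'; have := IH _ Q0z Qny; rewrite /=.
  case: (odd n) => /= [zy /sim_swap | zy yz']; last exact: sim_trans zy yz'.
  by rewrite swap_pairK; apply: sim_trans.
have [z Q0z] := Q_nonempty 0.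
by exists z; split => //; have := chain N z z Q0z (Q_period z Q0z); rewrite odd_N.
Qed.

(* The index of the n-th edge visited by the orbit i |-> i + k + 1 (mod 2k+1). *)
Definition orbit_index (k n : nat) : nat := (n * k.+1) %% k.*2.+1.

Lemma orbit_indexS (k n : nat) :
  orbit_index k n.+1 = (orbit_index k n + k + 1) %% k.*2.+1.
Proof. by rewrite /orbit_index -addnA modnDml mulSn addnC addn1. Qed.

Lemma orbit_indexSk (k n : nat) :
  (orbit_index k n.+1 + k) %% k.*2.+1 = orbit_index k n.
Proof.
rewrite orbit_indexS modnDml (_ : _ + k + 1 + k = orbit_index k n + k.*2.+1).
  by rewrite modnDr modn_small // ltn_pmod.
by lia.
Qed.

(* Asteroid => invertible pair: Q n collects the crossing pairs of the orbit
   edge x_i y_i, i = orbit_index k n, with x_(i+k) y_(i+k); the walk avoided by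
   x_i y_i links Q n to the swaps of Q (n + 1), and N = 2k+1 is odd. *)
Lemma invertible_of_asteroid (k : nat) (x y : nat -> T) :
  weak_edge_asteroid e k x y -> exists u v, invertible_pair e u v.
Proof.
case=> k_gt0 _ walks; set N := k.*2.+1.
pose E i := (x i, y i).
have links i : i < N ->
    (exists z, cross_pair (E i) (E ((i + k) %% N)) z) /\
    (forall z z', cross_pair (E i) (E ((i + k) %% N)) z ->
                  cross_pair (E i) (E ((i + k + 1) %% N)) z' -> sim e z z').
  by move=> lt_iN; apply: avoided_walk_cross_pairs; apply: walks.
pose Q n := cross_pair (E (orbit_index k n)) (E ((orbit_index k n + k) %% N)).
have idx_lt n : orbit_index k n < N by rewrite ltn_pmod.
have [z [Q0z z_swap]] : exists z, Q 0 z /\ sim e z (swap_pair z).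
  apply: (@odd_orbit_sim_swap Q N); first by rewrite /N /= odd_double.
  - by move=> n; apply: (links _ (idx_lt n)).1.
  - exact: cross_pair_sim.
  - move=> n z z' Qnz /cross_pair_swap; rewrite orbit_indexSk orbit_indexS.
    exact: (links _ (idx_lt n)).2.
  - by rewrite /Q /orbit_index modnMr mod0n.
by exists z.1, z.2; split; [apply: cross_pair_neq Q0z | case: z Q0z z_swap].
Qed.

Lemma strict_path_of_sim (p q : T * T) :
  sim e p q -> exists s, path strict_step p s /\ last p s = q.
Proof.
case=> s [_ s_path <-]; elim: s p s_path => [|r s IH] p /=; first by exists [::].
case/andP; rewrite walk_stepE => /orP[/andP[/eqP <- _]|pr] /IH // [s' [s'_path s'_last]].
by exists (r :: s'); rewrite /= pr.
Qed.

Definition antipodal_cycle (k : nat) (w : nat -> T) : Prop :=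
  [/\ forall n, e (w n) (w n.+1),
      forall n, ~~ e (w n) (w (n + k.+2)),
      forall n, w n != w (n + k.+1) &
      forall n, w (n + k.*2.+2) = w n].

Section HalfTurn.
(* A strict path of length m from p0 to its swap, continued by its own swap,
   yields a 2m-periodic sequence of pairs whose first coordinates form an
   antipodal cycle. *)
Variables (p0 : T * T) (s : seq (T * T)).
Hypotheses (s_path : path strict_step p0 s) (s_last : last p0 s = swap_pair p0).
Hypothesis s_gt0 : 0 < size s.

Let m := size s.
Let W (r : nat) : T * T := nth p0 (p0 :: s) r.

Definition spin (n : nat) : T * T :=
  if odd (n %/ m) then swap_pair (W (n %% m)) else W (n %% m).

Lemma spinE (q r : nat) :
  r < m -> spin (q * m + r) = if odd q then swap_pair (W r) else W r.
Proof. by move=> lt_rm; rewrite /spin divnMDl // divn_small // addn0 modnMDl modn_small. Qed.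

Lemma spin_half (n : nat) : spin (n + m) = swap_pair (spin n).
Proof.
rewrite (divn_eq n m) -addnA [_ + m]addnC addnA -mulSnr.
by rewrite !spinE ?ltn_pmod //=; case: (odd _); rewrite ?swap_pairK.
Qed.

(* Consecutive pairs are related by strict steps, also across the turns since
   the path ends at the swap of its start. *)
Lemma spin_step (n : nat) : strict_step (spin n) (spin n.+1).
Proof.
have W_step r : r < m -> strict_step (W r) (W r.+1) by move=> lt_rm; apply/(pathP p0).
rewrite (divn_eq n m) -addnS; set q := n %/ m; set r := n %% m.
have lt_rm : r < m by rewrite ltn_pmod.
have [lt_r1m|] := ltnP r.+1 m.
  by rewrite !spinE //; case: (odd q); rewrite ?strict_step_swap W_step.
move=> le_mr1; have eq_r1m : r.+1 = m by apply/eqP; rewrite eqn_leq lt_rm.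
have W_last : W m = swap_pair p0.
  by rewrite /W -s_last -[last p0 s]/(last p0 (p0 :: s)) -nth_last.
have last_step : strict_step (W r) (swap_pair p0) by rewrite -W_last -eq_r1m W_step.
rewrite eq_r1m -[q * m + m]addn0 -mulSnr !spinE //= /W /= -/(W r).
case: (odd q) last_step => //= last_step.
by rewrite -[p0 in strict_step _ p0]swap_pairK strict_step_swap.
Qed.

End HalfTurn.

(* An invertible pair yields an antipodal cycle: the strict path from (u, v)
   to (v, u) has at least two steps, since (u, v) cannot move to (v, u) at
   once (u is adjacent to itself). *)
Lemma antipodal_cycle_of_invertible (u v : T) :
  invertible_pair e u v -> exists k w, 0 < k /\ antipodal_cycle k w.
Proof.
case=> nuv /strict_path_of_sim [s [s_path s_last]].
have s_gt1 : 1 < size s.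
  case: s s_path s_last => [_ [eq_uv _]|q [|q' s]] //; first by rewrite eq_uv eqxx in nuv.
  by rewrite /= andbT => step eq_q; move: step; rewrite eq_q => /and5P[_ _ _ /negP[]].
have s_gt0 : 0 < size s by apply: ltnW.
have half := spin_half (u, v) s_gt0; have step := spin_step s_path s_last s_gt0.
exists (size s).-1, (fun n => (spin (u, v) s n).1); split; first by rewrite -ltnS prednK.
split=> n /=; first by case/and5P: (step n).
- by rewrite (_ : n + _ = n.+1 + size s) ?half; [case/and5P: (step n) | lia].
- by rewrite (_ : n + _ = n + size s) ?half; [case/and5P: (step n) | lia].
- by rewrite (_ : n + _ = n + size s + size s) ?half ?swap_pairK //; lia.
Qed.

Lemma antipodal_shift (k j : nat) (w : nat -> T) :
  antipodal_cycle k w -> antipodal_cycle k (fun n => w (j + n)).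
Proof.
case=> w_edge w_far w_neq w_period.
by split=> n; [rewrite addnS | rewrite addnA | rewrite addnA | rewrite addnA].
Qed.

(* w n is the successor of the antipode of w (n + k), so they are not adjacent. *)
Lemma antipodal_near (k : nat) (w : nat -> T) :
  antipodal_cycle k w -> forall n, ~~ e (w n) (w (n + k)).
Proof.
case=> _ w_far _ w_period n; rewrite e_sym.
by have := w_far (n + k); rewrite (_ : n + k + k.+2 = n + k.*2.+2) ?w_period //; lia.
Qed.

Lemma antipodal_avoids0 (k d : nat) (w : nat -> T) :
  antipodal_cycle k w -> k <= d <= k.+2 -> avoids e (w 0, w 1) (w d, w d.+1).
Proof.
move=> cyc d_range; have near := antipodal_near cyc; case: cyc => w_edge w_far w_neq _.
have [n0k n1k1] := (near 0, near 1); have [n0k2 n1k3] := (w_far 0, w_far 1).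
have [d0 d1] := (w_neq 0, w_neq 1); rewrite ?add0n ?add1n in n0k n1k1 n0k2 n1k3 d0 d1.
have [-> | [-> | ->]] : d = k \/ d = k.+1 \/ d = k.+2 by lia.
all: apply/avoidsP; rewrite /avoid_config !w_edge.
- rewrite (nonadj_neq n0k) d0 (nonadj_neq n1k1) n0k n1k1 !orbT /= andbT.
  by rewrite eq_sym (nonadj_neighbour_neq n0k (w_edge 0)).
- by rewrite d0 (nonadj_neq n0k2) (nonadj_neq n1k1) d1 n0k2 n1k1.
- rewrite (nonadj_neq n0k2) d1 (nonadj_neq n1k3) n0k2 n1k3 !orbT /= andbT.
  by rewrite (nonadj_neighbour_neq _ (w_edge k.+2)) // e_sym.
Qed.

Lemma same_edge_refl (b : T * T) : same_edge b b.
Proof. by rewrite /same_edge eqxx. Qed.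

Section CycleAsteroid.
Variables (k : nat) (w : nat -> T).
Hypothesis w_cycle : antipodal_cycle k w.

Lemma cycle_avoids (j d : nat) :
  k <= d <= k.+2 -> avoids e (w j, w j.+1) (w (j + d), w (j + d).+1).
Proof.
move=> d_range; have := antipodal_avoids0 (antipodal_shift j w_cycle) d_range.
by rewrite /= addn0 addn1 addnS.
Qed.

Lemma cycle_mod (m n : nat) : m = n %[mod k.*2.+2] -> w m = w n.
Proof.
case: w_cycle => _ _ _ w_period.
have w_mul q r : w (r + q * k.*2.+2) = w r.
  by elim: q => [|q IH]; rewrite ?addn0 // mulSnr addnA w_period.
move=> eq_mn; rewrite (divn_eq m k.*2.+2) (divn_eq n k.*2.+2).
by rewrite ![_ * _ + _]addnC !w_mul eq_mn.
Qed.

Lemma cycle_edge_mod (m n : nat) :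
  m = n %[mod k.*2.+2] -> (w m, w m.+1) = (w n, w n.+1).
Proof.
move=> eq_mn; have eq_mn1 : m.+1 = n.+1 %[mod k.*2.+2].
  by rewrite -[m.+1]addn1 -[n.+1]addn1 -modnDml eq_mn modnDml.
by rewrite (cycle_mod eq_mn) (cycle_mod eq_mn1).
Qed.

Fixpoint cycle_segment (a len : nat) : seq T :=
  if len is l.+1 then w a.+1 :: cycle_segment a.+1 l else [::].

Lemma segment_path (a len : nat) : path e (w a) (cycle_segment a len).
Proof.
case: w_cycle => w_edge _ _ _.
by elim: len a => //= len IH a; rewrite w_edge IH.
Qed.

Lemma segment_edges (a len : nat) (c : T * T) :
  c \in walk_edges (w a) (cycle_segment a len) ->
  exists2 t, t < len & c = (w (a + t), w (a + t).+1).
Proof.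
elim: len a => //= len IH a; rewrite /walk_edges /= inE => /orP[/eqP ->|].
  by exists 0; rewrite ?addn0.
by case/IH => t lt_t ->; exists t.+1; rewrite ?addSnnS.
Qed.

Lemma segment_last (a len : nat) (d : T * T) :
  last d (walk_edges (w a) (cycle_segment a len.+1)) = (w (a + len), w (a + len).+1).
Proof.
elim: len a d => [|len IH] a d; first by rewrite addn0.
by rewrite -addSnnS -(IH a.+1 (w a, w a.+1)).
Qed.

Lemma cycle_walk (i a len j j' : nat) :
  i + k <= a -> a + len <= i + k.+3 -> 0 < len ->
  a = j %[mod k.*2.+2] -> a + len.-1 = j' %[mod k.*2.+2] ->
  exists (w0 : T) (ws : seq T),
    [/\ is_walk e w0 ws, same_edge (first_edge w0 ws) (w j, w j.+1),
        same_edge (last_edge w0 ws) (w j', w j'.+1) & avoids_walk e (w i, w i.+1) w0 ws].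
Proof.
case: len => // len lo hi _ eq_aj eq_aj'.
exists (w a), (cycle_segment a len.+1); split.
- by rewrite /is_walk segment_path.
- by rewrite -(cycle_edge_mod eq_aj) same_edge_refl.
- by rewrite /last_edge segment_last -(cycle_edge_mod eq_aj') same_edge_refl.
move=> c /segment_edges [t lt_t ->].
have [le_it d_range] : i <= a + t /\ k <= a + t - i <= k.+2 by clear eq_aj eq_aj'; lia.
by rewrite -(subnKC le_it); apply: cycle_avoids.
Qed.

(* The edges w_0w_1, ..., w_2k w_(2k+1) of the cycle form a weak edge-asteroid:
   the walk for w_iw_(i+1) is the segment of the cycle opposite to it. *)
Lemma cycle_asteroid : 0 < k -> weak_edge_asteroid e k w (fun n => w n.+1).
Proof.
case: w_cycle => w_edge _ _ _ k_gt0; split=> // i lt_i /=.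
have [lt_ik | ] := ltnP i k.
  by apply: (@cycle_walk i (i + k) 2); rewrite ?modn_small //; lia.
rewrite leq_eqVlt => /orP[/eqP eq_ki | lt_ki].
  subst i; apply: (@cycle_walk k (k + k) 3); rewrite ?(modn_small (_ : k + k < _)) //; try lia.
  rewrite (_ : k + k + 1 = k.*2.+1) ?modnn ?mod0n; last by lia.
  by rewrite (_ : k + k + 3.-1 = k.*2.+2) ?modnn //; lia.
have -> : (i + k) %% k.*2.+1 = i - k.+1.
  by rewrite (_ : i + k = i - k.+1 + k.*2.+1) ?modnDr ?modn_small //; lia.
have -> : (i + k + 1) %% k.*2.+1 = i - k.
  by rewrite (_ : i + k + 1 = i - k + k.*2.+1) ?modnDr ?modn_small //; lia.
apply: (@cycle_walk i (i + k.+1) 2) => //; try lia.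
  by rewrite (_ : i + k.+1 = i - k.+1 + k.*2.+2) ?modnDr //; lia.
by rewrite (_ : _ + _ = i - k + k.*2.+2) ?modnDr //; lia.
Qed.

End CycleAsteroid.

End ReflexiveGraph.

Theorem theorem6 (T : finType) (e : rel T)
    (e_refl : forall v : T, e v v) (e_sym : symmetric e) :
  (exists u v : T, invertible_pair e u v) <->
  (exists (k : nat) (x y : nat -> T), weak_edge_asteroid e k x y).
Proof.
split=> [[u [v uv_inv]] | [k [x [y asteroid]]]].
  have [k [w [k_gt0 w_cycle]]] := antipodal_cycle_of_invertible e_refl uv_inv.
  by exists k, w, (fun n => w n.+1); apply: cycle_asteroid.
exact: (invertible_of_asteroid e_refl e_sym asteroid).
Qed.
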